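(* Under the standing assumptions described in the context (including (H4)–(H8)), for every $k=0,\dots,N$: $$|\sigma^*_{k+1}|\le H^2h^2,\qquad |\sigma_{k+1}|\le \tfrac12 H^2h^2,\qquad |\tau_{k+1}|\le \tfrac12H^2h^2+\tfrac12K_2H^3h^3.$$
   Context: Let $T>0$ and let $g:[0,T]\to[0,\infty)$ be increasing, left-continuous, continuous at $0$, with a finite set $D_g\subset(0,T)$ of discontinuity points; $\Delta^+\varphi(t)=\varphi(t^+)-\varphi(t)$; $g^B(t)=\sum_{s\in[0,t)}\Delta^+g(s)$, $g^C=g-g^B$; $\mu_g$ is the Lebesgue–Stieltjes measure with $\mu_g([c,d))=g(d)-g(c)$. For $u:[0,T]\to\mathbb R$ the Stieltjes derivative at $t$ is $u'_g(t)=\lim_{s\to t}\frac{u(s)-u(t)}{g(s)-g(t)}$ if $t\notin D_g$ and $u'_g(t)=\frac{u(t^+)-u(t)}{\Delta^+g(t)}$ if $t\in D_g$. Let $f:[0,T]\times\mathbb R\to\mathbb R$, $x_0\in\mathbb R$, and let $x$ be the solution of $x'_g(t)=f(t,x(t))$ for $\mu_g$-a.e. $t\in[0,T)$, $x(0)=x_0$; it satisfies $x(t)=x_0+\int_{[0,t)}f(s,x(s))\,\mathrm d\mu_g(s)$ for all $t\in[0,T]$. Put $f_*(x)(t)=f(t,x(t))$, $f_*^B(x)(t)=\sum_{s\in[0,t)}\Delta^+f_*(x)(s)$, $f_*^C(x)=f_*(x)-f_*^B(x)$. A function $u$ is $g$-Lipschitz with constant $H$ if $|u(t)-u(s)|\le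 H|g(t)-g(s)|$ for all $t,s$; $g$-continuous means: for every $t_0$ and $\epsilon>0$ there is $\delta>0$ with $|g(t)-g(t_0)|<\delta\Rightarrow|u(t)-u(t_0)|<\epsilon$. Hypotheses: (H4) $0=t_0<t_1<\dots<t_{N+1}=T$ with $t_{k+1}-t_k=h>0$ for all $k$, and $D_g\subset\{t_k\}$; $K_1=\max\{\Delta^+g(d):d\in D_g\}$. (H5) $f_*(x)$ is $g$-Lipschitz with constant $H>0$, and $f_*^C(x)$ and $g^C$ are Lipschitz with constant $H$. (H6) for every $c\in\mathbb R$, $f(\cdot,c)$ is bounded and $g$-continuous on $[0,T]$. (H7) for every $t$, $f(t,\cdot)\in C^1(\mathbb R)$ and $|\partial_x f(t,x)|<K_2$ for all $(t,x)$. (H8) for every $t\in[0,T)$ and $c$, the right limit $f(t^+,c)=\lim_{s\to t^+}f(s,c)$ exists, $f(t^+,\cdot)\in C^1(\mathbb R)$ and $|\partial_x f(t^+,x)|<K_3$ for all $(t,x)$. Notation: $x_k=x(t_k)$, $x_k^+=x(t_k^+)$. Local errors, $k=0,\dots,N$: $\sigma^*_{k+1}=x_{k+1}-x_k^+-f(t_k^+,x_k^+)(g(t_{k+1})-g(t_k^+))$; $\sigma_{k+1}=x_{k+1}-x_k^+-\tfrac12(f(t_k^+,x_k^+)+f(t_{k+1},x_{k+1}))(g(t_{k+1})-g(t_k^+))$; $x^*_{k+1}=x_{k+1}-\sigma^*_{k+1}$; $\tau_{k+1}=x_{k+1}-x_k^+-\tfrac12(f(t_k^+,x_k^+)+f(t_{k+1},x^*_{k+1}))(g(t_{k+1})-g(t_k^+))$.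 *)

From Stdlib Require Import Reals Lra List ClassicalEpsilon.
Open Scope R_scope.

(** Right limit of phi at t (as a relation), and its value (chosen by epsilon;
    meaningful only when the limit exists). *)
Definition is_rlim (phi : R -> R) (t l : R) : Prop :=
  forall eps, 0 < eps -> exists delta, 0 < delta /\
    forall s, t < s < t + delta -> Rabs (phi s - l) < eps.

Definition rlim (phi : R -> R) (t : R) : R :=
  epsilon (inhabits 0) (fun l => is_rlim phi t l).

Definition jump (phi : R -> R) (t : R) : R := rlim phi t - phi t.

Definition fsum (L : list R) (a : R -> R) : R :=
  fold_right (fun s acc => a s + acc) 0 L.

Definition is_jump_sum (phi : R -> R) (t S : R) : Prop :=
  exists L : list R, NoDup L /\
    (forall s, In s L <-> (0 <= s < t /\ jump phi s <> 0)) /\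
    S = fsum L (jump phi).

Definition jump_part (phi : R -> R) (t : R) : R :=
  epsilon (inhabits 0) (fun S => is_jump_sum phi t S).
Definition cont_part (phi : R -> R) (t : R) : R := phi t - jump_part phi t.

Definition cont_in (T : R) (u : R -> R) (t : R) : Prop :=
  forall eps, 0 < eps -> exists delta, 0 < delta /\
    forall s, 0 <= s <= T -> Rabs (s - t) < delta -> Rabs (u s - u t) < eps.

Definition Dg (T : R) (g : R -> R) (t : R) : Prop :=
  0 <= t <= T /\ ~ cont_in T g t.

Definition left_cont_on (T : R) (g : R -> R) : Prop :=
  forall t, 0 < t <= T -> forall eps, 0 < eps -> exists delta, 0 < delta /\
    forall s, 0 <= s -> t - delta < s <= t -> Rabs (g s - g t) < eps.

Definition g_lipschitz (T : R) (g u : R -> R) (L : R) : Prop :=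
  forall t s, 0 <= t <= T -> 0 <= s <= T -> Rabs (u t - u s) <= L * Rabs (g t - g s).

Definition lipschitz (T : R) (u : R -> R) (L : R) : Prop :=
  forall t s, 0 <= t <= T -> 0 <= s <= T -> Rabs (u t - u s) <= L * Rabs (t - s).

Definition g_cont (T : R) (g u : R -> R) : Prop :=
  forall t0, 0 <= t0 <= T -> forall eps, 0 < eps -> exists delta, 0 < delta /\
    forall t, 0 <= t <= T -> Rabs (g t - g t0) < delta -> Rabs (u t - u t0) < eps.

Definition has_gderiv (T : R) (g u : R -> R) (t l : R) : Prop :=
  (Dg T g t -> exists ur, is_rlim u t ur /\ l = (ur - u t) / jump g t) /\
  (~ Dg T g t -> forall eps, 0 < eps -> exists delta, 0 < delta /\
     forall s, 0 <= s <= T -> Rabs (s - t) < delta -> g s <> g t ->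
       Rabs ((u s - u t) / (g s - g t) - l) < eps).

(** mu_g-null subsets of [0,T): outer measure zero w.r.t. covers by
    intervals [c,d) in [0,T], with mu_g([c,d)) = g(d) - g(c). *)
Definition g_null (T : R) (g : R -> R) (Nset : R -> Prop) : Prop :=
  forall eps, 0 < eps -> exists c d : nat -> R,
    (forall n, 0 <= c n /\ c n <= d n /\ d n <= T) /\
    (forall t, Nset t -> exists n, c n <= t < d n) /\
    (forall m, sum_f_R0 (fun n => g (d n) - g (c n)) m <= eps).

(** finite families of pairwise disjoint intervals (a_j,b_j) in [lo,T],
    listed in increasing order *)
Fixpoint intervals_ok (T lo : R) (l : list (R * R)) : Prop :=
  match l with
  | nil => True
  | (a, b) :: r => lo <= a /\ a < b /\ b <= T /\ intervals_ok T b r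
  end.

Definition sum_incr (u : R -> R) (l : list (R * R)) : R :=
  fold_right (fun p acc => (u (snd p) - u (fst p)) + acc) 0 l.
Definition sum_abs_incr (u : R -> R) (l : list (R * R)) : R :=
  fold_right (fun p acc => Rabs (u (snd p) - u (fst p)) + acc) 0 l.

Definition g_AC (T : R) (g u : R -> R) : Prop :=
  forall eps, 0 < eps -> exists delta, 0 < delta /\
    forall l, intervals_ok T 0 l -> sum_incr g l < delta -> sum_abs_incr u l < eps.

Definition is_g_solution (T : R) (g : R -> R) (f : R -> R -> R) (x0 : R)
  (x : R -> R) : Prop :=
  x 0 = x0 /\ g_AC T g x /\
  exists Nset, g_null T g Nset /\
    forall t, 0 <= t < T -> ~ Nset t -> has_gderiv T g x t (f t (x t)).

(* On the open cell (t_k, t_{k+1}) the integrator g has no jumps, so the jump parts of g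
   and of f(., x(.)) are constant on (t_k, t_{k+1}], and (H5) makes g and f(., x(.))
   H-Lipschitz there.  Hence g(t_{k+1}) - g(t_k^+) <= H h and
   |f(s, x(s)) - f(t_k^+, x_k^+)| <= H (s - t_k) on the cell.
   The heart of the argument is a mean value inequality for Stieltjes derivatives: if v is
   g-absolutely continuous and |v'_g| <= M outside a mu_g-null set, then
   |v(b) - v(a)| <= M (g(b) - g(a)).  It is proved with Cousin's lemma: in a fine tagged
   partition, intervals with a good tag obey the derivative bound, while those tagged in the
   null set (or at b, a possible jump of g) lie in intervals of small total g-measure, so
   absolute continuity makes their contribution small.  Applied to v = x - c g on
   [a, t_{k+1}] and letting a -> t_k^+, every local error x_{k+1} - x_k^+ - c dG is bounded
   by sup |f(s, x(s)) - c| * dG; choosing c = f(t_k^+, x_k^+) and the trapezoidal average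
   gives sigma* and sigma, and tau differs from sigma by a K2-Lipschitz term in sigma*. *)

From Pilot Require Import Defs.
From Stdlib Require Import Reals Lra List ClassicalEpsilon.
From Stdlib Require Import Lia Classical Permutation.
Open Scope R_scope.

Ltac split_Rabs :=
  unfold Rabs in *;
  repeat match goal with
  | |- context [Rcase_abs ?x] => destruct (Rcase_abs x)
  | H : context [Rcase_abs ?x] |- _ => destruct (Rcase_abs x)
  end.

Definition nondecreasing_on (T : R) (g : R -> R) : Prop :=
  forall s u, 0 <= s -> s <= u -> u <= T -> g s <= g u.

(** * Right limits *)

Lemma is_rlim_near u t l r e :
  is_rlim u t l -> 0 < r -> 0 < e -> exists s, t < s < t + r /\ Rabs (u s - l) < e.
Proof.
  intros Hl Hr He. destruct (Hl e He) as [d [Hd Hs]].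
  assert (Hm := Rmin_pos _ _ Hd Hr).
  exists (t + Rmin d r / 2).
  assert (Rmin d r <= d) by apply Rmin_l. assert (Rmin d r <= r) by apply Rmin_r.
  split; [lra | apply Hs; lra].
Qed.

Lemma is_rlim_abs_le u t l c r B :
  is_rlim u t l -> 0 < r -> (forall s, t < s < t + r -> Rabs (u s - c) <= B) ->
  Rabs (l - c) <= B.
Proof.
  intros Hl Hr HB. apply Rnot_lt_le; intro Hc.
  destruct (is_rlim_near u t l r (Rabs (l - c) - B) Hl Hr ltac:(lra)) as [s [Hs Hus]].
  specialize (HB s Hs). revert Hus HB Hc. split_Rabs; lra.
Qed.

Lemma is_rlim_unique u t l1 l2 : is_rlim u t l1 -> is_rlim u t l2 -> l1 = l2.
Proof.
  intros H1 H2. destruct (Req_dec l1 l2) as [|Hne]; [assumption|exfalso].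
  assert (Hpos : 0 < Rabs (l1 - l2)) by (apply Rabs_pos_lt; lra).
  enough (Rabs (l1 - l2) <= 0) by lra.
  apply Rle_plus_epsilon; intros e He. rewrite Rplus_0_l.
  destruct (H2 e He) as [d [Hd Hs]].
  apply (is_rlim_abs_le u t l1 l2 d e H1 Hd). intros s Hs'. left; apply Hs, Hs'.
Qed.

Lemma rlim_eq u t l : is_rlim u t l -> rlim u t = l.
Proof.
  intro Hl. apply (is_rlim_unique u t); [|exact Hl].
  unfold rlim. apply epsilon_spec. exists l; exact Hl.
Qed.

Lemma cont_in_is_rlim T u t : cont_in T u t -> 0 <= t < T -> is_rlim u t (u t).
Proof.
  intros Hc Ht e He. destruct (Hc e He) as [d [Hd Hs]].
  exists (Rmin d (T - t)). split; [apply Rmin_pos; lra|].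
  intros s Hs'. assert (Rmin d (T - t) <= d) by apply Rmin_l.
  assert (Rmin d (T - t) <= T - t) by apply Rmin_r.
  apply Hs; [lra|]. split_Rabs; lra.
Qed.

Lemma is_rlim_sub_scal u w t l m c :
  is_rlim u t l -> is_rlim w t m -> is_rlim (fun s => u s - c * w s) t (l - c * m).
Proof.
  intros Hu Hw e He.
  assert (Hc : 0 < Rabs c + 1) by (generalize (Rabs_pos c); lra).
  destruct (Hu (e / 2) ltac:(lra)) as [d1 [Hd1 H1]].
  destruct (Hw (e / 2 / (Rabs c + 1))) as [d2 [Hd2 H2]]; [apply Rdiv_lt_0_compat; lra|].
  exists (Rmin d1 d2). split; [apply Rmin_pos; lra|]. intros s Hs.
  assert (Rmin d1 d2 <= d1) by apply Rmin_l. assert (Rmin d1 d2 <= d2) by apply Rmin_r.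
  specialize (H1 s ltac:(lra)). specialize (H2 s ltac:(lra)).
  assert (Hcw : Rabs c * Rabs (w s - m) <= e / 2).
  { apply Rle_trans with ((Rabs c + 1) * (e / 2 / (Rabs c + 1))); [|right; field; lra].
    apply Rmult_le_compat; try apply Rabs_pos; lra. }
  replace (u s - c * w s - (l - c * m)) with ((u s - l) + - (c * (w s - m))) by ring.
  eapply Rle_lt_trans; [apply Rabs_triang|].
  rewrite Rabs_Ropp, Rabs_mult. lra.
Qed.

Lemma is_rlim_perturb u w v t l m K r :
  0 <= K -> 0 < r -> is_rlim u t l -> is_rlim v t m ->
  (forall s, t < s < t + r -> Rabs (w s - u s) <= K * Rabs (v s - m)) -> is_rlim w t l.
Proof.
  intros HK Hr Hu Hv Hw e He.
  destruct (Hu (e / 2) ltac:(lra)) as [d1 [Hd1 H1]].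
  destruct (Hv (e / 2 / (K + 1))) as [d2 [Hd2 H2]]; [apply Rdiv_lt_0_compat; lra|].
  exists (Rmin (Rmin d1 d2) r). split; [repeat apply Rmin_pos; lra|]. intros s Hs.
  assert (Rmin (Rmin d1 d2) r <= Rmin d1 d2) by apply Rmin_l.
  assert (Rmin (Rmin d1 d2) r <= r) by apply Rmin_r.
  assert (Rmin d1 d2 <= d1) by apply Rmin_l. assert (Rmin d1 d2 <= d2) by apply Rmin_r.
  specialize (H1 s ltac:(lra)). specialize (H2 s ltac:(lra)). specialize (Hw s ltac:(lra)).
  assert (K * Rabs (v s - m) <= e / 2).
  { apply Rle_trans with ((K + 1) * (e / 2 / (K + 1))); [|right; field; lra].
    apply Rmult_le_compat; try apply Rabs_pos; lra. }
  replace (w s - l) with ((w s - u s) + (u s - l)) by ring.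
  eapply Rle_lt_trans; [apply Rabs_triang|]. lra.
Qed.

Lemma is_rlim_cauchy u t :
  (forall e, 0 < e -> exists d, 0 < d /\
     forall s s', t < s < t + d -> t < s' < t + d -> Rabs (u s - u s') < e) ->
  exists l, is_rlim u t l.
Proof.
  intro Hc.
  set (w := fun n : nat => u (t + / (INR n + 1))).
  assert (Hpos : forall n : nat, 0 < / (INR n + 1)).
  { intro n. apply Rinv_0_lt_compat. generalize (pos_INR n); lra. }
  assert (Hsmall : forall d, 0 < d -> exists N, forall n, (n >= N)%nat -> / (INR n + 1) < d).
  { intros d Hd. destruct (archimed_cor1 d Hd) as [N [HN HN0]]. exists N. intros n Hn.
    apply Rle_lt_trans with (/ INR N); [|exact HN].
    apply Rinv_le_contravar; [apply lt_0_INR; lia|]. apply le_INR in Hn. lra. }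
  assert (Hw : Cauchy_crit w).
  { intros e He. destruct (Hc e He) as [d [Hd Hs]]. destruct (Hsmall d Hd) as [N HN].
    exists N. intros n m Hn Hm. unfold Rdist, w.
    specialize (HN n Hn) as Hn'. specialize (HN m Hm) as Hm'.
    apply Hs; split; generalize (Hpos n) (Hpos m); lra. }
  destruct (R_complete w Hw) as [l Hl]. exists l.
  intros e He. destruct (Hc (e / 2) ltac:(lra)) as [d [Hd Hs]].
  exists d. split; [exact Hd|]. intros s Hst.
  destruct (Hsmall d Hd) as [N1 HN1]. destruct (Hl (e / 2) ltac:(lra)) as [N2 HN2].
  specialize (HN1 (N1 + N2)%nat ltac:(lia)). specialize (HN2 (N1 + N2)%nat ltac:(lia)).
  specialize (Hpos (N1 + N2)%nat). unfold Rdist, w in HN2.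
  specialize (Hs s (t + / (INR (N1 + N2) + 1)) Hst ltac:(lra)).
  replace (u s - l) with ((u s - u (t + / (INR (N1 + N2) + 1)))
                          + (u (t + / (INR (N1 + N2) + 1)) - l)) by ring.
  eapply Rle_lt_trans; [apply Rabs_triang|]. lra.
Qed.

Lemma nondecreasing_is_rlim T g t :
  nondecreasing_on T g -> 0 <= t < T ->
  exists L, is_rlim g t L /\ forall s, t < s <= T -> L <= g s.
Proof.
  intros Hg Ht.
  set (E := fun y => exists s, t < s <= T /\ y = - g s).
  assert (Hb : bound E).
  { exists (- g t). intros y [s [Hs ->]]. assert (g t <= g s) by (apply Hg; lra). lra. }
  assert (Hne : exists y, E y) by (exists (- g T), T; split; [lra|reflexivity]).
  destruct (completeness E Hb Hne) as [m [Hub Hlub]].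
  assert (HE : forall s, t < s <= T -> - g s <= m) by (intros s Hs; apply Hub; exists s; auto).
  exists (- m). split.
  - intros e He.
    destruct (classic (exists s, t < s <= T /\ m - e < - g s)) as [[s [Hs Hgs]]|Hn].
    + exists (s - t). split; [lra|]. intros s' Hs'.
      assert (g s' <= g s) by (apply Hg; lra). specialize (HE s' ltac:(lra)).
      split_Rabs; lra.
    + enough (m <= m - e) by lra. apply Hlub. intros y [s [Hs ->]].
      apply Rnot_gt_le. intro Hc. apply Hn. exists s; split; [exact Hs|lra].
  - intros s Hs. specialize (HE s Hs). lra.
Qed.

(** * Jump parts *)

Lemma fsum_perm (L L' : list R) a : Permutation L L' -> fsum L a = fsum L' a.
Proof. induction 1; simpl; [reflexivity | congruence | ring | congruence]. Qed.

Lemma is_jump_sum_unique phi t S1 S2 :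
  is_jump_sum phi t S1 -> is_jump_sum phi t S2 -> S1 = S2.
Proof.
  intros [L1 [HN1 [HL1 ->]]] [L2 [HN2 [HL2 ->]]].
  apply fsum_perm, NoDup_Permutation; [exact HN1 | exact HN2 |].
  intro s. rewrite HL1, HL2. reflexivity.
Qed.

Lemma jump_part_eq phi t S : is_jump_sum phi t S -> jump_part phi t = S.
Proof.
  intro HS. apply (is_jump_sum_unique phi t); [|exact HS].
  unfold jump_part. apply epsilon_spec. exists S; exact HS.
Qed.

Lemma is_jump_sum_exists phi t (G : list R) :
  (forall s, 0 <= s < t -> jump phi s <> 0 -> In s G) -> exists S, is_jump_sum phi t S.
Proof.
  intro HG.
  set (P := fun s => 0 <= s < t /\ jump phi s <> 0).
  set (L := filter (fun s => if excluded_middle_informative (P s) then true else false)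
                   (nodup Req_dec_T G)).
  exists (fsum L (jump phi)), L. split; [|split; [|reflexivity]].
  - apply NoDup_filter, NoDup_nodup.
  - intro s. unfold L. rewrite filter_In, nodup_In.
    destruct (excluded_middle_informative (P s)) as [Hs|Hs].
    + split; [intros _; exact Hs | intros _; split; [apply HG; apply Hs | reflexivity]].
    + split; [intros [_ Hf]; discriminate | intro Hs'; contradiction].
Qed.

Lemma is_jump_sum_extend phi t t' S :
  t <= t' -> (forall s, t <= s < t' -> jump phi s = 0) ->
  is_jump_sum phi t S -> is_jump_sum phi t' S.
Proof.
  intros Htt' Hz [L [HN [HL HS]]]. exists L. split; [exact HN | split; [|exact HS]].
  intro s. rewrite HL. split; [intros [Hs Hj]; split; [lra | exact Hj]|].
  intros [Hs Hj]. split; [|exact Hj]. split; [lra|].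
  apply Rnot_le_lt. intro Hts. apply Hj, Hz. lra.
Qed.

Lemma cont_part_sub phi t t' (G : list R) :
  t <= t' -> (forall s, 0 <= s < t -> jump phi s <> 0 -> In s G) ->
  (forall s, t <= s < t' -> jump phi s = 0) ->
  cont_part phi t' - cont_part phi t = phi t' - phi t.
Proof.
  intros Htt' HG Hz. destruct (is_jump_sum_exists phi t G HG) as [S HS].
  unfold cont_part.
  rewrite (jump_part_eq phi t S HS), (jump_part_eq phi t' S); [ring|].
  exact (is_jump_sum_extend phi t t' S Htt' Hz HS).
Qed.

(** * Sums over finite families of intervals *)

Definition lsum {A : Type} (F : A -> R) (l : list A) : R :=
  fold_right (fun a s => F a + s) 0 l.

Lemma lsum_map {A B : Type} (F : B -> R) (f : A -> B) l :
  lsum F (map f l) = lsum (fun a => F (f a)) l.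
Proof. induction l as [|a l IH]; simpl; [reflexivity | now rewrite IH]. Qed.

Lemma lsum_le {A : Type} (F G : A -> R) l :
  (forall a, In a l -> F a <= G a) -> lsum F l <= lsum G l.
Proof.
  induction l as [|a l IH]; intro H; simpl; [lra|].
  apply Rplus_le_compat; [apply H; left; reflexivity|].
  apply IH. intros; apply H; right; assumption.
Qed.

Lemma lsum_scal {A : Type} c (F : A -> R) l : lsum (fun a => c * F a) l = c * lsum F l.
Proof. induction l as [|a l IH]; simpl; [ring | rewrite IH; ring]. Qed.

Lemma lsum_plus {A : Type} (F G : A -> R) l :
  lsum (fun a => F a + G a) l = lsum F l + lsum G l.
Proof. induction l as [|a l IH]; simpl; [ring | rewrite IH; ring]. Qed.

Lemma lsum_filter_split {A : Type} (F : A -> R) (P : A -> bool) l :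
  lsum F l = lsum F (filter P l) + lsum F (filter (fun a => negb (P a)) l).
Proof. induction l as [|a l IH]; simpl; [ring | destruct (P a); simpl; rewrite IH; ring]. Qed.

Lemma lsum_filter_and {A : Type} (F : A -> R) (P Q : A -> bool) l :
  lsum F (filter P l) =
  lsum F (filter (fun a => andb (P a) (Q a)) l)
  + lsum F (filter (fun a => andb (P a) (negb (Q a))) l).
Proof.
  induction l as [|a l IH]; simpl; [ring|].
  destruct (P a), (Q a); simpl; rewrite IH; ring.
Qed.

(* Stdlib's Reals exports an unrelated [sum_incr], hence the qualified name. *)
Lemma sum_incr_lsum u l : Defs.sum_incr u l = lsum (fun p => u (snd p) - u (fst p)) l.
Proof. reflexivity. Qed.

Lemma sum_abs_incr_lsum u l : sum_abs_incr u l = lsum (fun p => Rabs (u (snd p) - u (fst p))) l.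
Proof. reflexivity. Qed.

Lemma sum_abs_incr_filter_split {A : Type} u (f : A -> R * R) (P : A -> bool) l :
  sum_abs_incr u (map f l) =
  sum_abs_incr u (map f (filter P l)) + sum_abs_incr u (map f (filter (fun a => negb (P a)) l)).
Proof. rewrite !sum_abs_incr_lsum, !lsum_map. apply lsum_filter_split. Qed.

Lemma sum_incr_filter_and {A : Type} u (f : A -> R * R) (P Q : A -> bool) l :
  Defs.sum_incr u (map f (filter P l)) =
  Defs.sum_incr u (map f (filter (fun a => andb (P a) (Q a)) l))
  + Defs.sum_incr u (map f (filter (fun a => andb (P a) (negb (Q a))) l)).
Proof. rewrite !sum_incr_lsum, !lsum_map. apply lsum_filter_and. Qed.

Lemma intervals_ok_In hi lo l p :
  intervals_ok hi lo l -> In p l -> lo <= fst p /\ fst p < snd p /\ snd p <= hi.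
Proof.
  revert lo. induction l as [|[a b] l IH]; intros lo Hl Hp; [destruct Hp|].
  destruct Hl as [Ha [Hab [Hb Hl]]]. destruct Hp as [<-|Hp]; simpl; [lra|].
  destruct (IH b Hl Hp) as [H1 H2]. split; [lra | exact H2].
Qed.

Lemma intervals_ok_restrict hi lo hi' lo' l :
  intervals_ok hi lo l -> (forall p, In p l -> lo' <= fst p /\ snd p <= hi') ->
  intervals_ok hi' lo' l.
Proof.
  revert lo lo'. induction l as [|[a b] l IH]; intros lo lo' Hl Hin; simpl; [exact I|].
  destruct Hl as [Ha [Hab [Hb Hl]]].
  destruct (Hin (a, b) (or_introl eq_refl)) as [Ha' Hb']; simpl in Ha', Hb'.
  repeat split; try assumption. apply (IH b b Hl).
  intros p Hp. split; [apply (intervals_ok_In hi b l p Hl Hp) | apply Hin; right; exact Hp].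
Qed.

Lemma intervals_ok_filter {A : Type} (f : A -> R * R) (P : A -> bool) hi lo l :
  intervals_ok hi lo (map f l) -> intervals_ok hi lo (map f (filter P l)).
Proof.
  revert lo. induction l as [|x l IH]; intros lo Hl; simpl in *; [exact I|].
  destruct (f x) as [a b] eqn:Hfx. destruct Hl as [Ha [Hab [Hb Hl]]].
  specialize (IH b Hl). destruct (P x); simpl.
  - rewrite Hfx. repeat split; assumption.
  - apply (intervals_ok_restrict hi b); [exact IH|].
    intros p Hp. destruct (intervals_ok_In hi b _ p IH Hp) as [H1 [H2 H3]]. split; lra.
Qed.

Lemma sum_incr_le T g hi lo l :
  nondecreasing_on T g -> 0 <= lo -> lo <= hi -> hi <= T ->
  intervals_ok hi lo l -> Defs.sum_incr g l <= g hi - g lo.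
Proof.
  intros Hg. revert lo. induction l as [|[a b] l IH]; intros lo H0 Hlo HT Hl; simpl.
  - assert (g lo <= g hi) by (apply Hg; lra). lra.
  - destruct Hl as [Ha [Hab [Hb Hl]]]. specialize (IH b ltac:(lra) Hb HT Hl).
    assert (g lo <= g a) by (apply Hg; lra). simpl in IH. lra.
Qed.

(** * Fine tagged partitions *)

Definition ival (x : R * R * R) : R * R := (fst (fst x), snd x).
Definition tag (x : R * R * R) : R := snd (fst x).

(* A tagged partition [(p_i, t_i, q_i)] of [a, b], consecutive and [dl]-fine. *)
Fixpoint fine_chain (dl : R -> R) (a b : R) (L : list (R * R * R)) : Prop :=
  match L with
  | nil => a = b
  | (p, t, q) :: r =>
      p = a /\ p <= t <= q /\ p < q /\ t - dl t < p /\ q < t + dl t /\ fine_chain dl q b r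
  end.

Lemma fine_chain_snoc dl a s t q L :
  fine_chain dl a s L -> s <= t <= q -> s < q -> t - dl t < s -> q < t + dl t ->
  fine_chain dl a q (L ++ (s, t, q) :: nil).
Proof.
  revert a. induction L as [|[[p0 t0] q0] L IH]; intros a HL H1 H2 H3 H4; simpl in *.
  - subst. repeat split; lra.
  - destruct HL as [-> [? [? [? [? HL]]]]].
    split; [reflexivity|]. do 4 (split; [assumption|]). apply IH; assumption.
Qed.

Lemma cousin dl a b :
  a <= b -> (forall t, a <= t <= b -> 0 < dl t) -> exists L, fine_chain dl a b L.
Proof.
  intros Hab Hdl.
  set (E := fun s => a <= s <= b /\ exists L, fine_chain dl a s L).
  assert (Ea : E a) by (split; [lra | exists nil; reflexivity]).
  assert (Hb : bound E) by (exists b; intros y [Hy _]; lra).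
  destruct (completeness E Hb (ex_intro _ a Ea)) as [m [Hub Hlub]].
  assert (Ham : a <= m) by (apply Hub, Ea).
  assert (Hmb : m <= b) by (apply Hlub; intros y [Hy _]; lra).
  assert (Hd := Hdl m ltac:(lra)).
  assert (Em : E m).
  { destruct (classic (exists s, E s /\ m - dl m < s)) as [[s [[Hs [L HL]] Hsm]]|Hn].
    - assert (s <= m) by (apply Hub; split; [lra | exists L; exact HL]).
      destruct (Rle_lt_or_eq_dec s m H) as [Hlt|<-]; [|split; [lra | exists L; exact HL]].
      split; [lra|]. exists (L ++ (s, m, m) :: nil). apply fine_chain_snoc; auto; lra.
    - enough (m <= m - dl m) by lra. apply Hlub. intros y Hy.
      apply Rnot_gt_le. intro Hc. apply Hn. exists y; split; [exact Hy | lra]. }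
  destruct Em as [_ [L HL]]. destruct (Req_dec m b) as [<-|Hmb'].
  - exists L; exact HL.
  - exfalso. set (q := Rmin b (m + dl m / 2)).
    assert (q <= b) by apply Rmin_l. assert (q <= m + dl m / 2) by apply Rmin_r.
    assert (m < q) by (apply Rmin_glb_lt; lra).
    enough (q <= m) by lra. apply Hub. split; [lra|].
    exists (L ++ (m, m, q) :: nil). apply fine_chain_snoc; auto; lra.
Qed.

Lemma fine_chain_le dl a b L : fine_chain dl a b L -> a <= b.
Proof.
  revert a. induction L as [|[[p t] q] L IH]; intros a HL; simpl in HL; [lra|].
  destruct HL as [-> [? [? [? [? HL]]]]]. specialize (IH q HL). lra.
Qed.

Lemma fine_chain_In dl a b L p t q :
  fine_chain dl a b L -> In (p, t, q) L ->
  a <= p /\ p <= t <= q /\ q <= b /\ t - dl t < p /\ q < t + dl t.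
Proof.
  revert a. induction L as [|[[p0 t0] q0] L IH]; intros a HL Hin; [destruct Hin|].
  destruct HL as [-> [? [? [? [? HL]]]]]. assert (Hq := fine_chain_le _ _ _ _ HL).
  destruct Hin as [Heq|Hin].
  - injection Heq as <- <- <-. repeat split; lra.
  - destruct (IH q0 HL Hin) as [? ?]. split; [lra | assumption].
Qed.

Lemma fine_chain_intervals_ok dl a b L :
  fine_chain dl a b L -> intervals_ok b a (map ival L).
Proof.
  revert a. induction L as [|[[p t] q] L IH]; intros a HL; simpl; [exact I|].
  destruct HL as [-> [? [? [? [? HL]]]]]. assert (Hq := fine_chain_le _ _ _ _ HL).
  repeat split; try lra. apply IH, HL.
Qed.

Lemma fine_chain_abs_incr dl a b L v :
  fine_chain dl a b L -> Rabs (v b - v a) <= sum_abs_incr v (map ival L).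
Proof.
  revert a. induction L as [|[[p t] q] L IH]; intros a HL; simpl in *.
  - subst. unfold Rminus. rewrite Rplus_opp_r, Rabs_R0. lra.
  - destruct HL as [-> [_ [_ [_ [_ HL]]]]]. specialize (IH q HL).
    replace (v b - v a) with ((v q - v a) + (v b - v q)) by ring.
    eapply Rle_trans; [apply Rabs_triang | lra].
Qed.

(** * g-absolute continuity *)

Lemma g_AC_incr T g u : g_AC T g u -> forall e, 0 < e -> exists d, 0 < d /\
  forall p q, 0 <= p -> p < q -> q <= T -> g q - g p < d -> Rabs (u q - u p) < e.
Proof.
  intros Hac e He. destruct (Hac e He) as [d [Hd Hl]]. exists d. split; [exact Hd|].
  intros p q H1 H2 H3 H4. specialize (Hl ((p, q) :: nil)); simpl in Hl.
  enough (Rabs (u q - u p) + 0 < e) by lra. apply Hl; [repeat split; lra | lra].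
Qed.

Lemma g_AC_flat T g u p q :
  g_AC T g u -> 0 <= p -> p <= q -> q <= T -> g p = g q -> u p = u q.
Proof.
  intros Hac H1 H2 H3 H4. destruct (Req_dec (u p) (u q)) as [|Hne]; [assumption|exfalso].
  assert (He : 0 < Rabs (u q - u p)) by (apply Rabs_pos_lt; lra).
  destruct (g_AC_incr T g u Hac _ He) as [d [Hd Hl]].
  destruct (Rle_lt_or_eq_dec p q H2) as [Hlt|<-]; [|apply Hne; reflexivity].
  specialize (Hl p q H1 Hlt H3 ltac:(lra)). lra.
Qed.

Lemma g_AC_sub_scal T g u c :
  nondecreasing_on T g -> g_AC T g u -> g_AC T g (fun s => u s - c * g s).
Proof.
  intros Hg Hac e He. destruct (Hac (e / 2) ltac:(lra)) as [d [Hd Hl]].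
  assert (Hc : 0 < Rabs c + 1) by (generalize (Rabs_pos c); lra).
  set (d' := e / 2 / (Rabs c + 1)).
  assert (Hd' : 0 < d') by (apply Rdiv_lt_0_compat; lra).
  exists (Rmin d d'). split; [apply Rmin_pos; assumption|]. intros l Hok Hsum.
  assert (Rmin d d' <= d) by apply Rmin_l. assert (Rmin d d' <= d') by apply Rmin_r.
  assert (Hu := Hl l Hok ltac:(lra)).
  assert (Hsplit : sum_abs_incr (fun s => u s - c * g s) l
                   <= sum_abs_incr u l + Rabs c * Defs.sum_incr g l).
  { rewrite !sum_abs_incr_lsum, sum_incr_lsum, <- lsum_scal, <- lsum_plus.
    apply lsum_le. intros p Hp. destruct (intervals_ok_In T 0 l p Hok Hp) as [H1 [H2 H3]].
    assert (g (fst p) <= g (snd p)) by (apply Hg; lra).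
    replace (u (snd p) - c * g (snd p) - (u (fst p) - c * g (fst p)))
      with ((u (snd p) - u (fst p)) + - (c * (g (snd p) - g (fst p)))) by ring.
    eapply Rle_trans; [apply Rabs_triang|].
    rewrite Rabs_Ropp, Rabs_mult, (Rabs_right (g (snd p) - g (fst p))) by lra. lra. }
  assert (Rabs c * Defs.sum_incr g l <= Rabs c * d')
    by (apply Rmult_le_compat_l; [apply Rabs_pos | lra]).
  assert ((Rabs c + 1) * d' = e / 2) by (unfold d'; field; lra).
  generalize (Rabs_pos c). nra.
Qed.

Lemma g_AC_is_rlim T g u t L :
  g_AC T g u -> 0 <= t < T -> is_rlim g t L -> exists l, is_rlim u t l.
Proof.
  intros Hac Ht HL. apply is_rlim_cauchy. intros e He.
  destruct (g_AC_incr T g u Hac e He) as [d [Hd Hl]].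
  destruct (HL (d / 2) ltac:(lra)) as [r [Hr Hgr]].
  exists (Rmin r (T - t)). split; [apply Rmin_pos; lra|].
  assert (Rmin r (T - t) <= r) by apply Rmin_l. assert (Rmin r (T - t) <= T - t) by apply Rmin_r.
  intros s s' Hs Hs'. assert (A := Hgr s ltac:(lra)). assert (A' := Hgr s' ltac:(lra)).
  destruct (Rtotal_order s s') as [Hlt|[<-|Hlt]].
  - rewrite Rabs_minus_sym. apply Hl; try lra. split_Rabs; lra.
  - unfold Rminus. rewrite Rplus_opp_r, Rabs_R0. exact He.
  - apply Hl; try lra. split_Rabs; lra.
Qed.

(** * Mean value inequality for the Stieltjes derivative *)

Lemma left_margin T g a c eta :
  nondecreasing_on T g -> left_cont_on T g -> 0 < a -> 0 <= c <= T -> 0 < eta ->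
  exists c', c' < c /\ forall s, a <= s <= T -> c' <= s -> g c - g s <= eta.
Proof.
  intros Hg Hl Ha Hc Heta. destruct (Rlt_or_le c a) as [Hca|Hac].
  - exists (c - 1). split; [lra|]. intros s Hs _. assert (g c <= g s) by (apply Hg; lra). lra.
  - destruct (Hl c ltac:(lra) eta Heta) as [r [Hr Hs]].
    exists (c - r / 2). split; [lra|]. intros s Hs1 Hs2.
    destruct (Rle_or_lt s c) as [Hsc|Hcs].
    + specialize (Hs s ltac:(lra) ltac:(lra)). split_Rabs; lra.
    + assert (g c <= g s) by (apply Hg; lra). lra.
Qed.

Lemma gderiv_local_bound T g v t l e :
  nondecreasing_on T g -> g_AC T g v -> 0 <= t <= T -> 0 < e ->
  (forall e, 0 < e -> exists d, 0 < d /\ forall s, 0 <= s <= T -> Rabs (s - t) < d ->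
     g s <> g t -> Rabs ((v s - v t) / (g s - g t) - l) < e) ->
  exists d, 0 < d /\ forall p q, 0 <= p <= t -> t <= q <= T -> t - d < p -> q < t + d ->
    Rabs (v q - v p) <= (Rabs l + e) * (g q - g p).
Proof.
  intros Hg Hac Ht He Hl. destruct (Hl e He) as [d [Hd Hs]]. exists d. split; [exact Hd|].
  assert (Hone : forall s, 0 <= s <= T -> Rabs (s - t) < d ->
                 Rabs (v s - v t) <= (Rabs l + e) * Rabs (g s - g t)).
  { intros s Hs1 Hs2. destruct (Req_dec (g s) (g t)) as [Heq|Hne].
    - assert (v s = v t).
      { destruct (Rle_or_lt s t) as [Hst|Hts].
        + apply (g_AC_flat T g); auto; lra.
        + symmetry. apply (g_AC_flat T g); auto; lra. }
      replace (v s - v t) with 0 by lra. rewrite Rabs_R0.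
      apply Rmult_le_pos; [generalize (Rabs_pos l); lra | apply Rabs_pos].
    - assert (Hr := Hs s Hs1 Hs2 Hne).
      assert (Hg0 : g s - g t <> 0) by lra.
      replace (v s - v t) with ((v s - v t) / (g s - g t) * (g s - g t)) by (field; exact Hg0).
      rewrite Rabs_mult. apply Rmult_le_compat_r; [apply Rabs_pos|].
      replace ((v s - v t) / (g s - g t)) with (l + ((v s - v t) / (g s - g t) - l)) by ring.
      eapply Rle_trans; [apply Rabs_triang | lra]. }
  intros p q Hp Hq Hpd Hqd.
  assert (g p <= g t) by (apply Hg; lra). assert (g t <= g q) by (apply Hg; lra).
  assert (Aq := Hone q ltac:(lra) ltac:(split_Rabs; lra)).
  assert (Ap := Hone p ltac:(lra) ltac:(split_Rabs; lra)).
  rewrite (Rabs_right (g q - g t)) in Aq by lra.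
  rewrite (Rabs_left1 (g p - g t)), Rabs_minus_sym in Ap by lra.
  replace (v q - v p) with ((v q - v t) + (v t - v p)) by ring.
  eapply Rle_trans; [apply Rabs_triang | lra].
Qed.

Lemma fine_chain_split_bound T g v dl a b L (bad : R * R * R -> bool) K e :
  nondecreasing_on T g -> 0 <= a -> b <= T -> 0 <= K -> fine_chain dl a b L ->
  (forall x, In x L -> bad x = false ->
     Rabs (v (snd x) - v (fst (fst x))) <= K * (g (snd x) - g (fst (fst x)))) ->
  sum_abs_incr v (map ival (filter bad L)) <= e ->
  Rabs (v b - v a) <= K * (g b - g a) + e.
Proof.
  intros Hg Ha Hb HK HL Hgood Hbad.
  assert (Hab := fine_chain_le _ _ _ _ HL).
  assert (Hgood_sum : Defs.sum_incr g (map ival (filter (fun x => negb (bad x)) L)) <= g b - g a).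
  { apply (sum_incr_le T); [exact Hg | lra | lra | lra |].
    apply intervals_ok_filter, (fine_chain_intervals_ok dl), HL. }
  eapply Rle_trans; [apply (fine_chain_abs_incr dl a b L v HL)|].
  rewrite (sum_abs_incr_filter_split v ival bad L).
  enough (sum_abs_incr v (map ival (filter (fun x => negb (bad x)) L)) <= K * (g b - g a))
    by lra.
  apply Rle_trans with (K * Defs.sum_incr g (map ival (filter (fun x => negb (bad x)) L)));
    [|apply Rmult_le_compat_l; assumption].
  rewrite sum_abs_incr_lsum, sum_incr_lsum, <- lsum_scal. apply lsum_le.
  intros p Hp. apply in_map_iff in Hp as [x [<- Hx]]. apply filter_In in Hx as [Hx Hbx].
  apply Hgood; [exact Hx | destruct (bad x); [discriminate | reflexivity]].
Qed.

Lemma lsum_filter_group {A : Type} (F : A -> R) (Q : A -> Prop) (idx : A -> nat)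
  (B : nat -> R) l :
  (forall n P, (forall x, In x l -> P x = true -> Q x /\ idx x = n) ->
     lsum F (filter P l) <= B n) ->
  forall m P, (forall x, In x l -> P x = true -> Q x /\ (idx x <= m)%nat) ->
  lsum F (filter P l) <= sum_f_R0 B m.
Proof.
  intros HB m. induction m as [|m IH]; intros P HP; simpl.
  - apply HB. intros x Hx HPx. destruct (HP x Hx HPx) as [HQ Hn]. split; [exact HQ | lia].
  - rewrite (lsum_filter_and F P (fun x => Nat.leb (idx x) m)).
    apply Rplus_le_compat.
    + apply IH. intros x Hx HPx. apply andb_prop in HPx as [HPx Hle].
      split; [apply (HP x Hx HPx) | apply Nat.leb_le, Hle].
    + apply HB. intros x Hx HPx. apply andb_prop in HPx as [HPx Hle].
      apply Bool.negb_true_iff, Nat.leb_gt in Hle. destruct (HP x Hx HPx) as [HQ Hn].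
      split; [exact HQ | lia].
Qed.

Lemma sum_incr_window T g hi lo hi' lo' l :
  nondecreasing_on T g -> intervals_ok hi lo l -> l <> nil ->
  (forall p, In p l -> lo' <= fst p /\ snd p <= hi') -> 0 <= lo' -> hi' <= T ->
  Defs.sum_incr g l <= g hi' - g lo'.
Proof.
  intros Hg Hl Hne Hin H0 HT. destruct l as [|p0 l0]; [contradiction|].
  destruct (Hin p0 (or_introl eq_refl)) as [H1 H2].
  destruct (intervals_ok_In hi lo _ p0 Hl (or_introl eq_refl)) as [_ [H3 _]].
  apply (sum_incr_le T); [exact Hg | exact H0 | lra | exact HT |].
  apply (intervals_ok_restrict hi lo); assumption.
Qed.

Lemma geometric_half_sum c m : 0 <= c -> sum_f_R0 (fun n => c * (/ 2) ^ n) m <= 2 * c.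
Proof.
  intro Hc. rewrite (sum_eq _ (fun n => (/ 2) ^ n * c)) by (intros; ring).
  rewrite <- scal_sum, tech3 by lra.
  assert (0 < (/ 2) ^ S m) by (apply pow_lt; lra).
  replace ((1 - (/ 2) ^ S m) / (1 - / 2)) with (2 - 2 * (/ 2) ^ S m) by field. nra.
Qed.

Section MeanValueInequality.

Variables (T : R) (g v : R -> R) (Nset : R -> Prop) (a b M : R).
Hypothesis g_nondecr : nondecreasing_on T g.
Hypothesis g_left_cont : left_cont_on T g.
Hypothesis v_AC : g_AC T g v.
Hypothesis Nset_null : g_null T g Nset.
Hypotheses (a_pos : 0 < a) (a_le_b : a <= b) (b_le_T : b <= T) (M_ge0 : 0 <= M).
Hypothesis v_gderiv : forall t, a <= t < b -> ~ Nset t -> exists l, Rabs l <= M /\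
  forall e, 0 < e -> exists d, 0 < d /\ forall s, 0 <= s <= T -> Rabs (s - t) < d ->
    g s <> g t -> Rabs ((v s - v t) / (g s - g t) - l) < e.

Definition at_b (x : R * R * R) : bool := if Req_dec_T (tag x) b then true else false.

(* Tags at [b], where [v] need not be differentiable, or in the null set. *)
Definition exceptional (x : R * R * R) : bool :=
  if excluded_middle_informative (tag x = b \/ Nset (tag x)) then true else false.

Section ExceptionalTags.

Variables (delta db : R) (c d cp : nat -> R) (dl : R -> R) (idx : R -> nat).
Variable L : list (R * R * R).
Hypotheses (delta_pos : 0 < delta) (db_pos : 0 < db).
Hypothesis L_chain : fine_chain dl a b L.
Hypothesis cd_bounds : forall n, 0 <= c n /\ c n <= d n /\ d n <= T.
Hypothesis cd_small : forall m, sum_f_R0 (fun n => g (d n) - g (c n)) m <= delta / 4.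
Hypothesis cp_margin : forall n s, a <= s <= T -> cp n <= s ->
  g (c n) - g s <= delta / 8 * (/ 2) ^ n.
Hypothesis db_margin : forall s, 0 <= s -> b - db < s <= b -> Rabs (g s - g b) < delta / 4.
Hypothesis dl_at_b : dl b <= db / 2.
Hypothesis dl_in_cover : forall t, a <= t < b -> Nset t ->
  cp (idx t) <= t - dl t /\ t + dl t <= d (idx t).

Let intervals_ok_L P : intervals_ok b a (map ival (filter P L)) :=
  intervals_ok_filter ival P b a L (fine_chain_intervals_ok dl a b L L_chain).

Lemma in_filter_L P p : In p (map ival (filter P L)) ->
  exists x, p = ival x /\ In x L /\ P x = true.
Proof.
  intro Hp. apply in_map_iff in Hp as [x [<- Hx]]. apply filter_In in Hx. exists x; auto.
Qed.

Lemma at_b_incr :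
  Defs.sum_incr g (map ival (filter (fun x => andb (exceptional x) (at_b x)) L)) < delta / 4.
Proof.
  set (l := map ival _).
  destruct (classic (l = nil)) as [E|Hne]; [rewrite E; simpl; lra|].
  set (lo := Rmax a (b - db / 2)).
  assert (a <= lo) by apply Rmax_l. assert (b - db / 2 <= lo) by apply Rmax_r.
  assert (lo <= b) by (apply Rmax_lub; lra).
  apply Rle_lt_trans with (g b - g lo).
  - apply (sum_incr_window T g b a); [exact g_nondecr | exact (intervals_ok_L _) | exact Hne
      | | lra | exact b_le_T].
    intros p Hp. destruct (in_filter_L _ p Hp) as [[[p0 t] q] [-> [Hx Hb]]].
    apply andb_prop in Hb as [_ Hb]. unfold at_b, tag in Hb; simpl in Hb.
    destruct (Req_dec_T t b) as [Htb|]; [|discriminate]. rewrite Htb in *.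
    destruct (fine_chain_In _ _ _ _ _ _ _ L_chain Hx) as [? [? [? [? ?]]]]; simpl.
    split; [apply Rmax_lub|]; lra.
  - specialize (db_margin lo ltac:(lra) ltac:(lra)). split_Rabs; lra.
Qed.

Lemma cover_incr n P :
  (forall x, In x L -> P x = true -> (tag x <> b /\ Nset (tag x)) /\ idx (tag x) = n) ->
  Defs.sum_incr g (map ival (filter P L)) <= g (d n) - g (c n) + delta / 8 * (/ 2) ^ n.
Proof.
  intro HP. destruct (cd_bounds n) as [Hc0 [Hcd HdT]].
  assert (0 < delta / 8 * (/ 2) ^ n) by (apply Rmult_lt_0_compat; [lra | apply pow_lt; lra]).
  set (l := map ival (filter P L)).
  destruct (classic (l = nil)) as [E|Hne].
  { rewrite E; simpl. assert (g (c n) <= g (d n)) by (apply g_nondecr; lra). lra. }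
  set (lo := Rmax (cp n) a).
  assert (cp n <= lo) by apply Rmax_l. assert (a <= lo) by apply Rmax_r.
  assert (Hin : forall p, In p l -> lo <= fst p /\ snd p <= d n).
  { intros p Hp. destruct (in_filter_L _ p Hp) as [[[p0 t] q] [-> [Hx HPx]]].
    destruct (HP _ Hx HPx) as [[Htb HN] Hn]; unfold tag in Htb, HN, Hn; simpl in *. subst n.
    destruct (fine_chain_In _ _ _ _ _ _ _ L_chain Hx) as [? [? [? [? ?]]]].
    assert (t < b) by (destruct (Rdichotomy _ _ Htb); lra).
    destruct (dl_in_cover t ltac:(lra) HN). simpl. split; [apply Rmax_lub|]; lra. }
  assert (Hlo : lo <= b).
  { assert (Hp0 : exists p0, In p0 l)
      by (destruct l as [|p0 l0]; [contradiction | exists p0; left; reflexivity]).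
    destruct Hp0 as [p0 Hp0]. destruct (Hin p0 Hp0) as [? _].
    destruct (intervals_ok_In b a l p0 (intervals_ok_L P) Hp0) as [_ [? ?]]. lra. }
  apply Rle_trans with (g (d n) - g lo).
  - apply (sum_incr_window T g b a); [exact g_nondecr | exact (intervals_ok_L P) | exact Hne
      | exact Hin | lra | exact HdT].
  - specialize (cp_margin n lo ltac:(lra) ltac:(lra)). lra.
Qed.

Lemma exceptional_incr : Defs.sum_incr g (map ival (filter exceptional L)) < delta.
Proof.
  rewrite (sum_incr_filter_and g ival exceptional at_b L).
  assert (Hb := at_b_incr).
  set (m := list_max (map (fun x => idx (tag x)) L)).
  assert (Hm : forall x, In x L -> (idx (tag x) <= m)%nat).
  { intros x Hx. apply (proj1 (Forall_forall _ _) (proj1 (list_max_le _ m) (Nat.le_refl m))).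
    apply (in_map (fun x => idx (tag x))), Hx. }
  assert (Hgroup :
    Defs.sum_incr g (map ival (filter (fun x => andb (exceptional x) (negb (at_b x))) L))
    <= sum_f_R0 (fun n => g (d n) - g (c n) + delta / 8 * (/ 2) ^ n) m).
  { rewrite sum_incr_lsum, lsum_map.
    apply (lsum_filter_group _ (fun x => tag x <> b /\ Nset (tag x)) (fun x => idx (tag x))).
    - intros n P HP. generalize (cover_incr n P HP). rewrite sum_incr_lsum, lsum_map. tauto.
    - intros x Hx HPx. split; [|apply Hm, Hx].
      apply andb_prop in HPx as [He Hb']. unfold exceptional in He. unfold at_b in Hb'.
      destruct (Req_dec_T (tag x) b); [discriminate|].
      destruct (excluded_middle_informative _) as [[|]|]; [contradiction | auto | discriminate]. }
  rewrite sum_plus in Hgroup.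
  assert (sum_f_R0 (fun n => delta / 8 * (/ 2) ^ n) m <= 2 * (delta / 8))
    by (apply geometric_half_sum; lra).
  specialize (cd_small m). lra.
Qed.

End ExceptionalTags.

(* The gauge [dl] at the tag [t]; for a null tag, [n] indexes a cover interval around it. *)
Definition fine_at (e db : R) (cp d : nat -> R) (t dl : R) (n : nat) : Prop :=
  0 < dl /\
  (t = b -> dl <= db / 2) /\
  (t < b -> Nset t -> cp n <= t - dl /\ t + dl <= d n) /\
  (t < b -> ~ Nset t -> forall p q, a <= p <= t -> t <= q <= b -> t - dl < p -> q < t + dl ->
     Rabs (v q - v p) <= (M + e) * (g q - g p)).

Lemma fine_at_exists e db (c d cp : nat -> R) t :
  0 < e -> 0 < db -> (forall t, Nset t -> exists n, c n <= t < d n) ->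
  (forall n, cp n < c n) -> a <= t <= b -> exists dl n, fine_at e db cp d t dl n.
Proof.
  intros He Hdb Hcov Hcp Ht. destruct (Req_dec t b) as [->|Htb].
  { exists (db / 2), 0%nat. repeat split; intros; lra. }
  assert (Htb' : t < b) by (destruct (Rdichotomy _ _ Htb); lra).
  destruct (classic (Nset t)) as [HN|HN].
  - destruct (Hcov t HN) as [n Hn]. specialize (Hcp n).
    exists (Rmin (t - cp n) (d n - t)), n.
    assert (Rmin (t - cp n) (d n - t) <= t - cp n) by apply Rmin_l.
    assert (Rmin (t - cp n) (d n - t) <= d n - t) by apply Rmin_r.
    split; [apply Rmin_pos; lra|]. split; [intro; contradiction|].
    split; [intros; split; lra | intros; contradiction].
  - destruct (v_gderiv t ltac:(lra) HN) as [l [Hl Hder]].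
    destruct (gderiv_local_bound T g v t l e) as [dd [Hdd Hloc]]; try assumption; [lra|].
    exists dd, 0%nat. split; [exact Hdd|]. split; [intro; contradiction|].
    split; [intros; contradiction|]. intros _ _ p q Hp Hq Hpd Hqd.
    eapply Rle_trans; [apply Hloc; lra|]. apply Rmult_le_compat_r; [|lra].
    assert (g p <= g q) by (apply g_nondecr; lra). lra.
Qed.

Lemma mvi_approx e : 0 < e -> Rabs (v b - v a) <= (M + e) * (g b - g a) + e.
Proof.
  intro He.
  (* Budget for the exceptional intervals: delta/4 from the null cover, delta/4 from
     enlarging its intervals to the left, delta/4 near b; in total less than delta. *)
  destruct (v_AC e He) as [delta [Hdelta Hac]].
  destruct (Nset_null (delta / 4) ltac:(lra)) as [c [d [Hcd [Hcov Hsum]]]].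
  destruct (choice (fun n c' => c' < c n /\ forall s, a <= s <= T -> c' <= s ->
                                g (c n) - g s <= delta / 8 * (/ 2) ^ n)) as [cp Hcp].
  { intro n. destruct (Hcd n) as [? [? ?]]. apply (left_margin T g); try assumption; [lra|].
    apply Rmult_lt_0_compat; [lra | apply pow_lt; lra]. }
  destruct (g_left_cont b ltac:(lra) (delta / 4) ltac:(lra)) as [db [Hdb Hdbm]].
  destruct (choice (fun t (gn : R * nat) => a <= t <= b -> fine_at e db cp d t (fst gn) (snd gn)))
    as [G HG].
  { intro t. destruct (classic (a <= t <= b)) as [Ht|Ht]; [|exists (0, 0%nat); tauto].
    destruct (fine_at_exists e db c d cp t He Hdb Hcov (fun n => proj1 (Hcp n)) Ht)
      as [dl [n Hdl]].
    exists (dl, n). intros _. exact Hdl. }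
  destruct (cousin (fun t => fst (G t)) a b a_le_b) as [L HL]; [intros t Ht; apply HG, Ht|].
  apply (fine_chain_split_bound T g v (fun t => fst (G t)) a b L exceptional);
    try assumption; [lra | lra | |].
  - intros [[p t] q] Hx Hgood. unfold exceptional, tag in Hgood; simpl in Hgood |- *.
    destruct (excluded_middle_informative _) as [|Hn]; [discriminate|].
    destruct (fine_chain_In _ _ _ _ _ _ _ HL Hx) as [? [? [? [? ?]]]].
    assert (t < b)
      by (destruct (Req_dec t b) as [|Htb]; [tauto | destruct (Rdichotomy _ _ Htb); lra]).
    apply (HG t); try lra; tauto.
  - left. apply Hac.
    + apply (intervals_ok_restrict b a).
      * apply intervals_ok_filter, (fine_chain_intervals_ok (fun t => fst (G t))), HL.
      * intros p Hp. apply in_map_iff in Hp as [[[p0 t] q] [<- Hx]].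
        apply filter_In in Hx as [Hx _].
        destruct (fine_chain_In _ _ _ _ _ _ _ HL Hx) as [? [? [? [? ?]]]]. simpl; lra.
    + apply (exceptional_incr delta db c d cp (fun t => fst (G t)) (fun t => snd (G t)));
        try assumption.
      * intros n s Hs Hcps. apply (proj2 (Hcp n)); assumption.
      * apply HG; lra.
      * intros t Ht HN. apply HG; [lra | lra | exact HN].
Qed.

Lemma mean_value_ineq : Rabs (v b - v a) <= M * (g b - g a).
Proof.
  assert (g a <= g b) by (apply g_nondecr; lra).
  apply Rle_plus_epsilon. intros e He.
  assert (Hk : 0 < g b - g a + 1) by lra.
  assert (Hmvi := mvi_approx (e / (g b - g a + 1)) ltac:(apply Rdiv_lt_0_compat; lra)).
  replace (M * (g b - g a) + e) with
    ((M + e / (g b - g a + 1)) * (g b - g a) + e / (g b - g a + 1)) by (field; lra).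
  exact Hmvi.
Qed.

End MeanValueInequality.

(** * One cell of the grid *)

Lemma derive_bounded_lipschitz (F dF : R -> R) K :
  (forall c, derivable_pt_lim F c (dF c)) -> (forall c, Rabs (dF c) < K) ->
  forall y z, Rabs (F y - F z) <= K * Rabs (y - z).
Proof.
  intros Hd Hb.
  assert (Hlt : forall y z, y < z -> Rabs (F z - F y) <= K * (z - y)).
  { intros y z Hyz. destruct (MVT_cor2 F dF y z Hyz (fun c _ => Hd c)) as [c [-> _]].
    rewrite Rabs_mult, (Rabs_right (z - y)) by lra.
    apply Rmult_le_compat_r; [lra|]. left; apply Hb. }
  intros y z. destruct (Rtotal_order y z) as [Hyz|[<-|Hyz]].
  - rewrite Rabs_minus_sym, (Rabs_minus_sym y z), (Rabs_right (z - y)) by lra. apply Hlt, Hyz.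
  - unfold Rminus. rewrite !Rplus_opp_r, Rabs_R0, Rmult_0_r. lra.
  - rewrite (Rabs_right (y - z)) by lra. apply Hlt, Hyz.
Qed.

Lemma g_lipschitz_cont_in T g u L s :
  0 < L -> g_lipschitz T g u L -> 0 <= s <= T -> cont_in T g s -> cont_in T u s.
Proof.
  intros HL Hl Hs Hc e He. destruct (Hc (e / L) ltac:(apply Rdiv_lt_0_compat; lra)) as [d [Hd Hg]].
  exists d. split; [exact Hd|]. intros s' Hs' Hd'.
  apply Rle_lt_trans with (L * Rabs (g s' - g s)); [apply Hl; assumption|].
  apply Rmult_lt_reg_l with (/ L); [apply Rinv_0_lt_compat, HL|].
  rewrite <- Rmult_assoc, Rinv_l, Rmult_1_l by lra.
  rewrite Rmult_comm. apply Hg; assumption.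
Qed.

Section GridCell.

Variables (T h H K2 x0 : R) (N k : nat) (g : R -> R) (f df : R -> R -> R) (x : R -> R).
Hypotheses (h_pos : 0 < h) (T_eq : T = INR (S N) * h) (k_le_N : (k <= N)%nat).
Hypotheses (g_nondecr : nondecreasing_on T g) (g_left_cont : left_cont_on T g).
Hypothesis Dg_grid : forall t, Dg T g t -> exists j, (1 <= j <= N)%nat /\ t = INR j * h.
Hypothesis H_pos : 0 < H.
Hypothesis fx_g_lip : g_lipschitz T g (fun t => f t (x t)) H.
Hypothesis fx_cont_lip : lipschitz T (cont_part (fun t => f t (x t))) H.
Hypothesis g_cont_lip : lipschitz T (cont_part g) H.
Hypothesis f_deriv : forall t c, 0 <= t <= T -> derivable_pt_lim (f t) c (df t c).
Hypothesis df_bound : forall t c, 0 <= t <= T -> Rabs (df t c) < K2.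
Hypothesis f_rlim : forall t c, 0 <= t < T -> exists l, is_rlim (fun s => f s c) t l.
Hypothesis x_sol : is_g_solution T g f x0 x.

Local Notation tk := (INR k * h).
Local Notation tk1 := (INR (S k) * h).
Local Notation fx := (fun t => f t (x t)).
Local Notation xkp := (rlim x tk).
Local Notation fkp := (rlim (fun s => f s xkp) tk).
Local Notation dG := (g tk1 - rlim g tk).

Lemma cell_endpoints : 0 <= tk /\ tk1 = tk + h /\ tk1 <= T.
Proof.
  assert (Hk : 0 <= INR k) by apply pos_INR.
  assert (HkN : INR (S k) <= INR (S N)) by (apply le_INR; lia).
  rewrite T_eq. rewrite S_INR in *. split; [|split]; [apply Rmult_le_pos; lra | ring |].
  apply Rmult_le_compat_r; lra.
Qed.

Lemma cont_in_cell s : tk < s < tk1 -> cont_in T g s.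
Proof.
  intro Hs. destruct cell_endpoints as [Htk [_ HT]].
  apply NNPP. intro Hnc. assert (HD : Dg T g s) by (split; [lra | exact Hnc]).
  destruct (Dg_grid s HD) as [j [_ ->]].
  assert (Hkj : INR k < INR j) by (apply Rmult_lt_reg_r with h; lra).
  assert (Hjk : INR j < INR (S k)) by (apply Rmult_lt_reg_r with h; lra).
  apply INR_lt in Hkj. apply INR_lt in Hjk. lia.
Qed.

Lemma jump_in_grid phi :
  (forall s, 0 <= s <= T -> cont_in T g s -> cont_in T phi s) ->
  forall s, 0 <= s < T -> jump phi s <> 0 -> In s (map (fun j => INR j * h) (seq 0 (S N))).
Proof.
  intros Hphi s Hs Hj. destruct (classic (cont_in T g s)) as [Hc|Hnc].
  - exfalso. apply Hj. unfold jump. rewrite (rlim_eq phi s (phi s)); [ring|].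
    apply (cont_in_is_rlim T); [apply Hphi; [lra | exact Hc] | exact Hs].
  - assert (HD : Dg T g s) by (split; [lra | exact Hnc]).
    destruct (Dg_grid s HD) as [j [Hj' ->]].
    apply (in_map (fun j => INR j * h)), in_seq. lia.
Qed.

Lemma cell_lipschitz phi :
  lipschitz T (cont_part phi) H ->
  (forall s, 0 <= s <= T -> cont_in T g s -> cont_in T phi s) ->
  forall t t', tk < t <= tk1 -> tk < t' <= tk1 -> Rabs (phi t - phi t') <= H * Rabs (t - t').
Proof.
  intros Hlip Hphi. destruct cell_endpoints as [Htk [Htk1 HT]].
  assert (Hsub : forall t t', tk < t <= t' -> t' <= tk1 ->
                 cont_part phi t' - cont_part phi t = phi t' - phi t).
  { intros t t' Ht Ht'.
    apply (cont_part_sub phi t t' (map (fun j => INR j * h) (seq 0 (S N)))); [lra | |].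
    - intros s Hs. apply jump_in_grid; [exact Hphi | lra].
    - intros s Hs. unfold jump. rewrite (rlim_eq phi s (phi s)); [ring|].
      apply (cont_in_is_rlim T); [|lra]. apply Hphi; [lra|]. apply cont_in_cell. lra. }
  intros t t' Ht Ht'. destruct (Rle_or_lt t t') as [Htt'|Ht't].
  - rewrite Rabs_minus_sym, (Rabs_minus_sym t), <- (Hsub t t') by lra. apply Hlip; lra.
  - rewrite <- (Hsub t' t) by lra. apply Hlip; lra.
Qed.

Lemma fx_cell_lipschitz t t' :
  tk < t <= tk1 -> tk < t' <= tk1 -> Rabs (fx t - fx t') <= H * Rabs (t - t').
Proof.
  apply (cell_lipschitz fx fx_cont_lip).
  intros s Hs Hc. apply (g_lipschitz_cont_in T g fx H s H_pos fx_g_lip Hs Hc).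
Qed.

Lemma g_cell_lipschitz t t' :
  tk < t <= tk1 -> tk < t' <= tk1 -> Rabs (g t - g t') <= H * Rabs (t - t').
Proof. apply (cell_lipschitz g g_cont_lip). intros s _ Hc. exact Hc. Qed.

Lemma g_rlim_tk : is_rlim g tk (rlim g tk) /\ forall s, tk < s <= T -> rlim g tk <= g s.
Proof.
  destruct cell_endpoints as [Htk [Htk1 HT]].
  destruct (nondecreasing_is_rlim T g tk g_nondecr ltac:(lra)) as [L [HL HLs]].
  rewrite (rlim_eq g tk L HL). split; assumption.
Qed.

Lemma dG_bounds : 0 <= dG <= H * h.
Proof.
  destruct cell_endpoints as [Htk [Htk1 HT]]. destruct g_rlim_tk as [HL HLs].
  split; [specialize (HLs tk1 ltac:(lra)); lra|].
  enough (Rabs (rlim g tk - g tk1) <= H * h) by (split_Rabs; lra).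
  apply (is_rlim_abs_le g tk _ _ h _ HL h_pos). intros s Hs.
  eapply Rle_trans; [apply g_cell_lipschitz; lra|].
  apply Rmult_le_compat_l; [lra | split_Rabs; lra].
Qed.

Lemma x_rlim_tk : is_rlim x tk xkp.
Proof.
  destruct x_sol as [_ [Hac _]]. destruct cell_endpoints as [Htk [Htk1 HT]].
  destruct (g_AC_is_rlim T g x tk _ Hac ltac:(lra) (proj1 g_rlim_tk)) as [l Hl].
  rewrite (rlim_eq x tk l Hl). exact Hl.
Qed.

Lemma K2_nonneg : 0 <= K2.
Proof.
  destruct cell_endpoints as [Htk [Htk1 HT]].
  generalize (df_bound 0 0 ltac:(lra)) (Rabs_pos (df 0 0)). lra.
Qed.

Lemma f_x_lipschitz s y z : 0 <= s <= T -> Rabs (f s y - f s z) <= K2 * Rabs (y - z).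
Proof.
  intro Hs. apply (derive_bounded_lipschitz (f s) (df s));
    intro c; [apply f_deriv | apply df_bound]; exact Hs.
Qed.

Lemma fx_rlim_tk : is_rlim fx tk fkp.
Proof.
  destruct cell_endpoints as [Htk [Htk1 HT]].
  destruct (f_rlim tk xkp ltac:(lra)) as [l Hl].
  assert (Hf : is_rlim (fun s => f s xkp) tk fkp) by (rewrite (rlim_eq _ tk l Hl); exact Hl).
  apply (is_rlim_perturb _ _ x tk fkp xkp K2 h K2_nonneg h_pos Hf x_rlim_tk).
  intros s Hs. apply f_x_lipschitz. lra.
Qed.

Lemma fx_near_tk s : tk < s <= tk1 -> Rabs (f s (x s) - fkp) <= H * (s - tk).
Proof.
  intro Hs. rewrite Rabs_minus_sym.
  apply (is_rlim_abs_le fx tk fkp (fx s) (s - tk) _ fx_rlim_tk ltac:(lra)). intros s' Hs'.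
  eapply Rle_trans; [apply fx_cell_lipschitz; lra|].
  apply Rmult_le_compat_l; [lra | split_Rabs; lra].
Qed.

Lemma x_increment_bound c B :
  0 <= B -> (forall s, tk < s < tk1 -> Rabs (f s (x s) - c) <= B) ->
  Rabs (x tk1 - xkp - c * dG) <= B * dG.
Proof.
  intros HB Hf. destruct x_sol as [_ [Hac [Nset [Hnull Hder]]]].
  destruct cell_endpoints as [Htk [Htk1 HT]]. destruct g_rlim_tk as [HL HLs].
  set (v := fun s => x s - c * g s).
  assert (Hv : forall a, tk < a < tk1 -> Rabs (v tk1 - v a) <= B * dG).
  { intros a Ha. apply Rle_trans with (B * (g tk1 - g a)).
    - apply (mean_value_ineq T g v Nset a tk1 B); try assumption; try lra.
      + apply g_AC_sub_scal; assumption.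
      + intros t Ht HN. exists (f t (x t) - c). split; [apply Hf; lra|].
        assert (HnD : ~ Dg T g t) by (intros [_ Hnc]; apply Hnc, cont_in_cell; lra).
        intros e He. destruct (proj2 (Hder t ltac:(lra) HN) HnD e He) as [d [Hd Hs]].
        exists d. split; [exact Hd|]. intros s Hs1 Hs2 Hgs.
        replace ((v s - v t) / (g s - g t) - (f t (x t) - c))
          with ((x s - x t) / (g s - g t) - f t (x t))
          by (unfold v; field; intro Hz; apply Hgs; lra).
        apply Hs; assumption.
    - apply Rmult_le_compat_l; [exact HB|]. specialize (HLs a ltac:(lra)). lra. }
  assert (Hvl : is_rlim v tk (xkp - c * rlim g tk))
    by (apply is_rlim_sub_scal; [exact x_rlim_tk | exact HL]).
  assert (A := is_rlim_abs_le v tk _ (v tk1) h (B * dG) Hvl h_pos).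
  replace (x tk1 - xkp - c * dG) with (- (xkp - c * rlim g tk - v tk1)) by (unfold v; ring).
  rewrite Rabs_Ropp. apply A. intros s Hs. rewrite Rabs_minus_sym. apply Hv. lra.
Qed.

Lemma sigma_star_bound : Rabs (x tk1 - xkp - fkp * dG) <= H ^ 2 * h ^ 2.
Proof.
  destruct cell_endpoints as [Htk [Htk1 HT]]. destruct dG_bounds as [HdG0 HdG].
  apply Rle_trans with ((H * h) * dG).
  - apply x_increment_bound; [nra|]. intros s Hs.
    eapply Rle_trans; [apply fx_near_tk; lra|]. apply Rmult_le_compat_l; lra.
  - replace (H ^ 2 * h ^ 2) with ((H * h) * (H * h)) by ring.
    apply Rmult_le_compat_l; [nra | exact HdG].
Qed.

Lemma sigma_bound :
  Rabs (x tk1 - xkp - / 2 * (fkp + f tk1 (x tk1)) * dG) <= / 2 * H ^ 2 * h ^ 2.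
Proof.
  destruct cell_endpoints as [Htk [Htk1 HT]]. destruct dG_bounds as [HdG0 HdG].
  apply Rle_trans with ((/ 2 * (H * h)) * dG).
  - apply x_increment_bound; [nra|]. intros s Hs.
    assert (A1 := fx_near_tk s ltac:(lra)).
    assert (A2 := fx_cell_lipschitz tk1 s ltac:(lra) ltac:(lra)).
    rewrite (Rabs_right (tk1 - s)) in A2 by lra.
    replace (f s (x s) - / 2 * (fkp + f tk1 (x tk1)))
      with (/ 2 * (f s (x s) - fkp) - / 2 * (f tk1 (x tk1) - f s (x s))) by field.
    unfold Rminus at 1. eapply Rle_trans; [apply Rabs_triang|].
    rewrite Rabs_Ropp, !Rabs_mult, (Rabs_right (/ 2)) by lra. nra.
  - replace (/ 2 * H ^ 2 * h ^ 2) with ((/ 2 * (H * h)) * (H * h)) by ring.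
    apply Rmult_le_compat_l; [nra | exact HdG].
Qed.

Lemma tau_bound :
  Rabs (x tk1 - xkp - / 2 * (fkp + f tk1 (x tk1 - (x tk1 - xkp - fkp * dG))) * dG)
  <= / 2 * H ^ 2 * h ^ 2 + / 2 * K2 * H ^ 3 * h ^ 3.
Proof.
  destruct cell_endpoints as [Htk [Htk1 HT]]. destruct dG_bounds as [HdG0 HdG].
  set (sigma_star := x tk1 - xkp - fkp * dG).
  assert (Hstar : Rabs sigma_star <= H ^ 2 * h ^ 2) by apply sigma_star_bound.
  assert (Hf := f_x_lipschitz tk1 (x tk1) (x tk1 - sigma_star) ltac:(lra)).
  replace (x tk1 - (x tk1 - sigma_star)) with sigma_star in Hf by ring.
  replace (x tk1 - xkp - / 2 * (fkp + f tk1 (x tk1 - sigma_star)) * dG)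
    with ((x tk1 - xkp - / 2 * (fkp + f tk1 (x tk1)) * dG)
          + / 2 * (f tk1 (x tk1) - f tk1 (x tk1 - sigma_star)) * dG) by ring.
  eapply Rle_trans; [apply Rabs_triang|]. apply Rplus_le_compat; [apply sigma_bound|].
  rewrite !Rabs_mult, (Rabs_right (/ 2)), (Rabs_right dG) by lra.
  assert (HfK : Rabs (f tk1 (x tk1) - f tk1 (x tk1 - sigma_star)) <= K2 * (H ^ 2 * h ^ 2))
    by (eapply Rle_trans; [exact Hf | apply Rmult_le_compat_l; [exact K2_nonneg | exact Hstar]]).
  replace (/ 2 * K2 * H ^ 3 * h ^ 3) with (/ 2 * (K2 * (H ^ 2 * h ^ 2)) * (H * h)) by ring.
  apply Rmult_le_compat; [apply Rmult_le_pos; [lra | apply Rabs_pos] | exact HdG0 | | exact HdG].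
  apply Rmult_le_compat_l; lra.
Qed.

End GridCell.

Theorem mainTheorem8 (T h H K2 K3 x0 : R) (N : nat) (g : R -> R)
  (f : R -> R -> R) (df dfp : R -> R -> R) (x : R -> R) :
  0 < T ->
  (forall t, 0 <= t <= T -> 0 <= g t) ->
  (forall s t, 0 <= s -> s <= t -> t <= T -> g s <= g t) ->
  left_cont_on T g ->
  cont_in T g 0 ->
  0 < h ->
  T = INR (S N) * h ->
  (forall t, Dg T g t -> exists k, (1 <= k <= N)%nat /\ t = INR k * h) ->
  0 < H ->
  g_lipschitz T g (fun t => f t (x t)) H ->
  lipschitz T (cont_part (fun t => f t (x t))) H ->
  lipschitz T (cont_part g) H ->
  (forall c, (exists M, forall t, 0 <= t <= T -> Rabs (f t c) <= M) /\
             g_cont T g (fun t => f t c)) ->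
  (forall t c, 0 <= t <= T -> derivable_pt_lim (f t) c (df t c)) ->
  (forall t, 0 <= t <= T -> continuity (df t)) ->
  (forall t c, 0 <= t <= T -> Rabs (df t c) < K2) ->
  (forall t c, 0 <= t < T -> exists l, is_rlim (fun s => f s c) t l) ->
  (forall t c, 0 <= t < T ->
     derivable_pt_lim (fun y => rlim (fun s => f s y) t) c (dfp t c)) ->
  (forall t, 0 <= t < T -> continuity (dfp t)) ->
  (forall t c, 0 <= t < T -> Rabs (dfp t c) < K3) ->
  is_g_solution T g f x0 x ->
  forall k : nat, (k <= N)%nat ->
    let tk := INR k * h in
    let tk1 := INR (S k) * h in
    let xk1 := x tk1 in
    let xkp := rlim x tk in
    let fkp := rlim (fun s => f s xkp) tk in
    let dG := g tk1 - rlim g tk in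
    let sigma_star := xk1 - xkp - fkp * dG in
    let sigma := xk1 - xkp - / 2 * (fkp + f tk1 xk1) * dG in
    let xstar := xk1 - sigma_star in
    let tau := xk1 - xkp - / 2 * (fkp + f tk1 xstar) * dG in
    Rabs sigma_star <= H ^ 2 * h ^ 2 /\
    Rabs sigma <= / 2 * H ^ 2 * h ^ 2 /\
    Rabs tau <= / 2 * H ^ 2 * h ^ 2 + / 2 * K2 * H ^ 3 * h ^ 3.
Proof.
  intros _ _ g_nondecr g_left_cont _ h_pos T_eq Dg_grid H_pos fx_g_lip fx_cont_lip g_cont_lip
    _ f_deriv _ df_bound f_rlim _ _ _ x_sol k k_le_N.
  cbv zeta.
  split; [|split].
  - eapply sigma_star_bound; eassumption.
  - eapply sigma_bound; eassumption.
  - eapply tau_bound; eassumption.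
Qed.
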